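(* Let $\mathcal{M}=(E,\mathcal{B})$ be a matroid of rank $r$. The vanishing ideal $I(V_{\mathcal{M}})\subseteq\mathbb{R}[x_e:e\in E]$ is generated by the polynomials $x_e^2-x_e$ for all $e\in E$, the polynomial $\sum_{e\in E}x_e-r$, and the monomials $x^C=\prod_{e\in C}x_e$ for all circuits $C\subseteq E$ of $\mathcal{M}$.
   Context: $V_{\mathcal{M}}=\{\mathbf{1}_B:B\in\mathcal{B}\}\subset\mathbb{R}^E$ is the base configuration; for a point set $V$, $I(V)$ is the ideal of all real polynomials vanishing at every point of $V$. Circuits are the inclusion-minimal dependent sets (sets not contained in any basis). *)

From HB Require Import structures.
From mathcomp Require Import all_boot all_order all_algebra.
From mathcomp Require Import mpoly.
From mathcomp Require Import reals.
Set Implicit Arguments. Unset Strict Implicit. Unset Printing Implicit Defensive.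
Import Order.TTheory GRing.Theory Num.Theory.
Local Open Scope ring_scope.

Definition is_matroid_bases (n : nat) (bases : {set {set 'I_n}}) : Prop :=
  bases != set0 /\
  forall B1 B2, B1 \in bases -> B2 \in bases ->
    forall x, x \in B1 :\: B2 ->
      exists2 y, y \in B2 :\: B1 & (y |: (B1 :\ x)) \in bases.

Definition independent (n : nat) (bases : {set {set 'I_n}}) (A : {set 'I_n}) : bool :=
  [exists B in bases, A \subset B].

Definition dependent (n : nat) (bases : {set {set 'I_n}}) (A : {set 'I_n}) : bool :=
  ~~ independent bases A.

Definition circuit (n : nat) (bases : {set {set 'I_n}}) (C : {set 'I_n}) : bool :=
  dependent bases C && [forall D : {set 'I_n}, (D \proper C) ==> ~~ dependent bases D].

Definition indicator (R : ringType) (n : nat) (B : {set 'I_n}) : 'I_n -> R :=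
  fun e => if e \in B then 1 else 0.

(* vanishing ideal I(V_M) as a predicate on polynomials *)
Definition vanishes_on_bases (R : comRingType) (n : nat) (bases : {set {set 'I_n}})
  (p : {mpoly R[n]}) : Prop :=
  forall B, B \in bases -> p.@[indicator R B] = 0.

Definition in_ideal_gen (R : comRingType) (n : nat) (S : {mpoly R[n]} -> Prop)
  (p : {mpoly R[n]}) : Prop :=
  exists (k : nat) (c g : 'I_k -> {mpoly R[n]}),
    (forall i, S (g i)) /\ p = \sum_(i < k) c i * g i.

Definition matroid_gens (R : comRingType) (n : nat) (bases : {set {set 'I_n}}) (r : nat)
  (q : {mpoly R[n]}) : Prop :=
  (exists e : 'I_n, q = 'X_e ^+ 2 - 'X_e)
  \/ q = \sum_(e < n) 'X_e - r%:R
  \/ (exists C : {set 'I_n}, circuit bases C /\ q = \prod_(e in C) 'X_e).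

(* Write L_S := prod_(i in S) x_i * prod_(i notin S) (1 - x_i) for S a subset
   of E, so that 1 = sum_S L_S.  Modulo the relations x_i^2 - x_i, multiplying
   by L_S evaluates at 1_S: p L_S = p(1_S) L_S.  Hence if p vanishes on V_M,
   every p L_S with S a basis lies in the ideal.  For S not a basis, L_S itself
   lies in the ideal: if S is dependent it contains a circuit C and x^C divides
   L_S; if S is independent then |S| <> r and
   (sum_e x_e - r) L_S = (|S| - r) L_S with |S| - r invertible. *)

From HB Require Import structures.
From mathcomp Require Import all_boot all_order all_algebra.
From mathcomp Require Import mpoly.
From mathcomp Require Import reals.
From mathcomp Require Import ring.
Set Implicit Arguments. Unset Strict Implicit. Unset Printing Implicit Defensive.
Import Order.TTheory GRing.Theory Num.Theory.
Local Open Scope ring_scope.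

Section IdealGen.
Variables (R : comRingType) (n : nat) (S : {mpoly R[n]} -> Prop).
Notation J := (in_ideal_gen S).

Lemma in_ideal_gen0 : J 0.
Proof.
exists 0%N, (fun _ => 0), (fun _ => 0); split; first by case.
by rewrite big_ord0.
Qed.

Lemma in_ideal_gen_mul c g : S g -> J (c * g).
Proof.
move=> Sg; exists 1%N, (fun _ => c), (fun _ => g); split=> //.
by rewrite big_ord1.
Qed.

Lemma in_ideal_genD p q : J p -> J q -> J (p + q).
Proof.
move=> [k1 [c1 [g1 [Sg1 ->]]]] [k2 [c2 [g2 [Sg2 ->]]]].
pose glue (T : Type) (a : 'I_k1 -> T) (b : 'I_k2 -> T) (i : 'I_(k1 + k2)) :=
  match split i with inl j => a j | inr j => b j end.
exists (k1 + k2)%N, (glue _ c1 c2), (glue _ g1 g2); split.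
  by move=> i; rewrite /glue; case: (split i).
rewrite big_split_ord /=; congr (_ + _); apply: eq_bigr => i _.
  by rewrite /glue (unsplitK (inl _ i)).
by rewrite /glue (unsplitK (inr _ i)).
Qed.

Lemma in_ideal_genMl q p : J p -> J (q * p).
Proof.
move=> [k [c [g [Sg ->]]]]; exists k, (fun i => q * c i), g; split=> //.
by rewrite mulr_sumr; apply: eq_bigr => i _; rewrite mulrA.
Qed.

Lemma in_ideal_genN p : J p -> J (- p).
Proof. by rewrite -mulN1r; apply: in_ideal_genMl. Qed.

Lemma in_ideal_genB p q : J p -> J q -> J (p - q).
Proof. by move=> Jp /in_ideal_genN; apply: in_ideal_genD. Qed.

Lemma in_ideal_gen_sum (I : finType) (F : I -> {mpoly R[n]}) :
  (forall i, J (F i)) -> J (\sum_i F i).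
Proof.
by move=> JF; apply: (big_ind J) => //; [apply: in_ideal_gen0 | apply: in_ideal_genD].
Qed.

Lemma in_ideal_gen_meval (v : 'I_n -> R) p :
  (forall g, S g -> g.@[v] = 0) -> J p -> p.@[v] = 0.
Proof.
move=> Sv [k [c [g [Sg ->]]]].
rewrite -/(meval _ _) raddf_sum /=; apply: big1 => i _.
by rewrite mevalM (Sv _ (Sg i)) mulr0.
Qed.

(* [p * L] is congruent to [p.@[v] * L] modulo the ideal; it suffices to check
   this on the variables, since such [p] form a subalgebra. *)
Section MulEval.
Variables (L : {mpoly R[n]}) (v : 'I_n -> R).

Definition mul_eval_congr (p : {mpoly R[n]}) := J (p * L - (p.@[v])%:MP * L).

Lemma mul_eval_congrC c : mul_eval_congr c%:MP.
Proof. by rewrite /mul_eval_congr mevalC subrr; apply: in_ideal_gen0. Qed.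

Lemma mul_eval_congrD p q :
  mul_eval_congr p -> mul_eval_congr q -> mul_eval_congr (p + q).
Proof.
rewrite /mul_eval_congr mevalD mpolyCD => Jp Jq.
have -> : (p + q) * L - ((p.@[v])%:MP + (q.@[v])%:MP) * L =
  (p * L - (p.@[v])%:MP * L) + (q * L - (q.@[v])%:MP * L) by ring.
exact: in_ideal_genD.
Qed.

Lemma mul_eval_congrM p q :
  mul_eval_congr p -> mul_eval_congr q -> mul_eval_congr (p * q).
Proof.
rewrite /mul_eval_congr mevalM mpolyCM => Jp Jq.
have -> : p * q * L - ((p.@[v])%:MP * (q.@[v])%:MP) * L =
  p * (q * L - (q.@[v])%:MP * L) + (q.@[v])%:MP * (p * L - (p.@[v])%:MP * L)
  by ring.
by apply: in_ideal_genD; apply: in_ideal_genMl.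
Qed.

Lemma mul_eval_congr_all :
  (forall i, mul_eval_congr 'X_i) -> forall p, mul_eval_congr p.
Proof.
move=> congrX p; rewrite (mpolyE p); apply: (big_ind mul_eval_congr).
- by rewrite -mpolyC0; apply: mul_eval_congrC.
- exact: mul_eval_congrD.
move=> m _; rewrite -mul_mpolyC; apply: mul_eval_congrM; first exact: mul_eval_congrC.
rewrite mpolyXE_id; apply: (big_ind mul_eval_congr).
- by rewrite -mpolyC1; apply: mul_eval_congrC.
- exact: mul_eval_congrM.
move=> i _; elim: (m i) => [|k IHk].
  by rewrite expr0 -mpolyC1; apply: mul_eval_congrC.
by rewrite exprS; apply: mul_eval_congrM.
Qed.

End MulEval.
End IdealGen.

Section Lagrange.
Variables (R : comRingType) (n : nat).

Definition lagrange01 (S : {set 'I_n}) : {mpoly R[n]} :=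
  \prod_(i < n) (if i \in S then 'X_i else 1 - 'X_i).

Lemma sum_lagrange01 : \sum_(S : {set 'I_n}) lagrange01 S = 1.
Proof.
pose F i (b : bool) : {mpoly R[n]} := if b then 'X_i else 1 - 'X_i.
have -> : \sum_(S : {set 'I_n}) lagrange01 S =
          \sum_(f : {ffun 'I_n -> bool}) \prod_i F i (f i).
  rewrite (reindex (fun f : {ffun 'I_n -> bool} => [set i | f i])) /=.
    by apply: eq_bigr => f _; apply: eq_bigr => i _; rewrite inE.
  exists (fun S : {set 'I_n} => [ffun i => i \in S]) => [f _ | S _].
    by apply/ffunP => i; rewrite ffunE inE.
  by apply/setP => i; rewrite inE ffunE.
rewrite -(bigA_distr_bigA F) /=.
by apply: big1 => i _; rewrite big_bool /F /= addrC subrK.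
Qed.

Lemma lagrange01_circuit_factor (S C : {set 'I_n}) : C \subset S ->
  lagrange01 S = (\prod_(i < n | i \notin C) (if i \in S then 'X_i else 1 - 'X_i))
                   * \prod_(e in C) 'X_e.
Proof.
move=> /subsetP CS; rewrite /lagrange01 (bigID (fun i => i \in C)) /= mulrC.
by congr (_ * _); apply: eq_bigr => i /CS ->.
Qed.

Lemma meval_sumX_indicator (S : {set 'I_n}) :
  (\sum_(e < n) 'X_e : {mpoly R[n]}).@[indicator R S] = #|S|%:R.
Proof.
rewrite -/(meval _ _) raddf_sum /=.
under eq_bigr do rewrite mevalXU.
rewrite /indicator -big_mkcond /= -sum1_card natr_sum.
by apply: eq_bigl.
Qed.

End Lagrange.

Section Matroid.
Variables (n : nat) (bases : {set {set 'I_n}}).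

Lemma dependent_sub_circuit (S : {set 'I_n}) :
  dependent bases S -> exists2 C, circuit bases C & C \subset S.
Proof.
move=> depS; have [C /minsetP [depC minC] CS] := minset_exists depS.
exists C => //; rewrite /circuit depC /=.
apply/forallP => D; apply/implyP => DC; apply/negP => depD.
have eqDC := minC D depD (proper_sub DC).
by rewrite eqDC properxx in DC.
Qed.

Lemma circuit_not_subset_basis (B C : {set 'I_n}) :
  B \in bases -> circuit bases C -> ~~ (C \subset B).
Proof.
move=> baseB /andP [depC _]; apply: contra depC => CB.
by apply/existsP; exists B; rewrite baseB CB.
Qed.

Lemma independent_card_basis (r : nat) (S : {set 'I_n}) :
  (forall B, B \in bases -> #|B| = r) ->
  independent bases S -> #|S| = r -> S \in bases.
Proof.
move=> card_bases /existsP [B /andP [baseB SB]] cardS.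
suff -> : S = B by [].
by apply/eqP; rewrite eqEcard SB /= card_bases // cardS.
Qed.

End Matroid.

Section VanishingIdeal.
Variables (R : numFieldType) (n : nat) (bases : {set {set 'I_n}}) (r : nat).
Hypothesis card_bases : forall B, B \in bases -> #|B| = r.
Notation J := (in_ideal_gen (matroid_gens bases r)).
Notation L := (@lagrange01 R n).

Lemma matroid_gens_vanish (q : {mpoly R[n]}) :
  matroid_gens bases r q -> vanishes_on_bases bases q.
Proof.
move=> [[e ->] | [-> | [C [circC ->]]]] B baseB.
- rewrite mevalB expr2 mevalM mevalXU /indicator.
  by case: (e \in B); rewrite ?mulr1 ?mulr0 subrr.
- by rewrite mevalB meval_sumX_indicator card_bases // -mpolyC_nat mevalC subrr.
- have /subsetPn [e eC eB] := circuit_not_subset_basis baseB circC.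
  by rewrite (bigD1 e) //= mevalM mevalXU /indicator (negbTE eB) mul0r.
Qed.

Lemma lagrange01_mul_eval (S : {set 'I_n}) (p : {mpoly R[n]}) :
  J (p * L S - (p.@[indicator R S])%:MP * L S).
Proof.
apply: (mul_eval_congr_all _ p) => i.
rewrite /mul_eval_congr mevalXU /indicator /lagrange01 (bigD1 i) //=.
set L' := \prod_(j < n | j != i) _.
have idem : J (L' * ('X_i ^+ 2 - 'X_i)) by apply: in_ideal_gen_mul; left; exists i.
case: (i \in S).
- by rewrite mpolyC1 (_ : _ - _ = L' * ('X_i ^+ 2 - 'X_i)) //; ring.
- rewrite mpolyC0 (_ : _ - _ = - (L' * ('X_i ^+ 2 - 'X_i))); last by ring.
  exact: in_ideal_genN idem.
Qed.

Lemma lagrange01_card_in_ideal (S : {set 'I_n}) : #|S| != r -> J (L S).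
Proof.
move=> cardS; set a : R := #|S|%:R - r%:R.
have a_neq0 : a != 0 by rewrite subr_eq0 eqr_nat.
have Ja : J (a%:MP * L S).
  set q : {mpoly R[n]} := \sum_(e < n) 'X_e - r%:R.
  have Jq : J (L S * q) by apply: in_ideal_gen_mul; right; left.
  have Jred : J (q * L S - a%:MP * L S).
    have := lagrange01_mul_eval S q.
    by rewrite /q mevalB meval_sumX_indicator -mpolyC_nat mevalC.
  rewrite (_ : _ * _ = L S * q - (q * L S - a%:MP * L S)); last by ring.
  exact: in_ideal_genB Jq Jred.
by rewrite -[L S]mul1r -mpolyC1 -(mulVf a_neq0) mpolyCM -mulrA; apply: in_ideal_genMl.
Qed.

Lemma lagrange01_dependent_in_ideal (S : {set 'I_n}) : dependent bases S -> J (L S).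
Proof.
move=> /dependent_sub_circuit [C circC CS]; rewrite (lagrange01_circuit_factor _ CS).
by apply: in_ideal_gen_mul; right; right; exists C.
Qed.

Lemma vanishing_in_ideal (p : {mpoly R[n]}) : vanishes_on_bases bases p -> J p.
Proof.
move=> van_p; rewrite -[p]mulr1 -(sum_lagrange01 R n) mulr_sumr.
apply: in_ideal_gen_sum => S; have [baseS | nbaseS] := boolP (S \in bases).
  by have := lagrange01_mul_eval S p; rewrite van_p // mpolyC0 mul0r subr0.
apply: in_ideal_genMl; have [indepS | depS] := boolP (independent bases S).
  apply: lagrange01_card_in_ideal; apply: contraNneq nbaseS.
  exact: independent_card_basis.
exact: lagrange01_dependent_in_ideal.
Qed.

End VanishingIdeal.

Theorem proposition4p4 (R : realType) (n : nat) (bases : {set {set 'I_n}}) (r : nat)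
  (hM : is_matroid_bases bases)
  (hr : forall B, B \in bases -> #|B| = r) :
  forall p : {mpoly R[n]},
    vanishes_on_bases bases p <-> in_ideal_gen (matroid_gens bases r) p.
Proof.
move=> p; split; first exact: vanishing_in_ideal.
move=> Jp B baseB; apply: (in_ideal_gen_meval _ Jp) => g gen_g.
exact: matroid_gens_vanish gen_g B baseB.
Qed.
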